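(* Let $k$ be an algebraically closed field of characteristic zero, $n\ge1$, $q\in k$ a primitive $2n$-th root of unity, $a\in k\setminus\{0\}$. Let $\mathfrak wH_{4n}$ be the weak Hopf algebra generated by $Z,X$ with $Z^{2n+1}=Z$, $ZX=qXZ$, $X^2=0$ and comultiplication $\Delta(Z)=Z\otimes Z+a(1-q^{-2})Z^{n+1}X\otimes ZX$, $\Delta(X)=X\otimes 1+Z^n\otimes X$ (tensor products of modules are formed via $\Delta$). For $i\in\mathbb Z_{2n}$ let $S_i$ be the $1$-dimensional module with $X$ acting by $0$ and $Z$ by $q^i$; $M_i$ the $2$-dimensional module with basis $v_1^i,v_2^i$, $Xv_1^i=v_2^i$, $Xv_2^i=0$, $Zv_1^i=q^iv_1^i$, $Zv_2^i=q^{i+1}v_2^i$; $N_0$ the $1$-dimensional module on which $Z,X$ act by $0$; $N_1$ the $2$-dimensional module with basis $w_1,w_2$, $Xw_1=w_2$, $Xw_2=0$, $Z$ acting by $0$. Then for all $i,j\in\mathbb Z_{2n}$ (indices modulo $2n$): (1) $S_i\otimes S_j\cong S_{i+j}\cong S_j\otimes S_i$; (2) $S_i\otimes M_j\cong M_{i+j}\cong M_j\otimes S_i$; (3) $M_i\otimes M_j\cong M_{i+j}\oplus M_{i+j+1}\cong M_j\otimes M_i$; (4) $N_0\otimes N_0\cong N_0\cong N_0\otimes S_i\cong S_i\otimes N_0$; (5) $N_0\otimes N_1\cong N_0\oplus N_0\cong N_0\otimes M_i$; (6) $N_1\otimes N_0\cong N_1\cong M_i\otimes N_0\cong N_1\otimes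 S_i\cong S_i\otimes N_1$; (7) $N_1\otimes N_1\cong N_1\oplus N_1\cong N_1\otimes M_i\cong M_i\otimes N_1$. *)

From HB Require Import structures.
From mathcomp Require Import all_boot all_order all_algebra.
From mathcomp Require Export mxtens.
Set Implicit Arguments. Unset Strict Implicit. Unset Printing Implicit Defensive.
Import GRing.Theory.
Local Open Scope ring_scope.

(* A finite-dimensional representation given by the action matrices of the
   generators Z and X on k^d (column-vector convention: v |-> A *m v). *)
Record wmod (k : fieldType) := WMod { wdim : nat; wZ : 'M[k]_wdim; wX : 'M[k]_wdim }.

Definition wiso (k : fieldType) (V W : wmod k) : Prop :=
  exists (P : 'M[k]_(wdim W, wdim V)) (Q : 'M[k]_(wdim V, wdim W)),
    [/\ P *m Q = 1%:M, Q *m P = 1%:M,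
        P *m wZ V = wZ W *m P & P *m wX V = wX W *m P].

Definition wtens (k : fieldType) (n : nat) (q a : k) (V W : wmod k) : wmod k :=
  @WMod k (wdim V * wdim W)
    (wZ V *t wZ W + (a * (1 - q ^- 2)) *: ((wZ V ^+ n.+1 *m wX V) *t (wZ W *m wX W)))
    (wX V *t 1%:M + (wZ V ^+ n) *t wX W).

Definition wsum (k : fieldType) (V W : wmod k) : wmod k :=
  @WMod k (wdim V + wdim W) (block_mx (wZ V) 0 0 (wZ W)) (block_mx (wX V) 0 0 (wX W)).

Definition modS (k : fieldType) (q : k) (i : nat) : wmod k :=
  @WMod k 1 (q ^+ i)%:M 0.

Definition modM (k : fieldType) (q : k) (i : nat) : wmod k :=
  @WMod k 2
    (\matrix_(r < 2, c < 2) (if r == c then q ^+ (i + r) else 0))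
    (\matrix_(r < 2, c < 2) (if (r == 1%N :> nat) && (c == 0%N :> nat) then 1 else 0)).

Definition modN0 (k : fieldType) : wmod k := @WMod k 1 0 0.

Definition modN1 (k : fieldType) : wmod k :=
  @WMod k 2 0
    (\matrix_(r < 2, c < 2) (if (r == 1%N :> nat) && (c == 0%N :> nat) then 1 else 0)).

From HB Require Import structures.
From mathcomp Require Import all_boot all_order all_algebra.
From mathcomp Require Import ring.
Set Implicit Arguments.
Unset Strict Implicit.
Unset Printing Implicit Defensive.
Import GRing.Theory.
Local Open Scope ring_scope.

(* All modules involved have dimension at most 2, so every claimed isomorphism
   is witnessed by an explicit pair of mutually inverse matrices; checking the
   four intertwining identities is a finite computation with 2x2 blocks.  The
   sign q^n = -1 makes Z^n act on M_i by s = q^(in) on v1 and by -s on v2.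
   The only non-diagonal phenomenon is M_i (x) M_j, where the correction term
   of Delta(Z) sends v1 (x) v1 to a multiple of v2 (x) v2: the vector
   v1 (x) v1 + a s v2 (x) v2 is a Z-eigenvector generating M_(i+j), and
   v1 (x) v2 generates M_(i+j+1). *)

Section Mx2.
Variable R : comPzRingType.

Definition mx2 (a b c d : R) : 'M[R]_2 :=
  \matrix_(r < 2, s < 2) if r == 0 :> nat then (if s == 0 :> nat then a else b)
                         else (if s == 0 :> nat then c else d).

Ltac mx2_ext := apply/matrixP; case=> [[|[|//]] ?]; case=> [[|[|//]] ?].

Lemma mx2_mul a b c d a' b' c' d' :
  mx2 a b c d *m mx2 a' b' c' d' =
  mx2 (a * a' + b * c') (a * b' + b * d') (c * a' + d * c') (c * b' + d * d').
Proof. by mx2_ext; rewrite !mxE !big_ord_recr big_ord0 /= !mxE /= add0r. Qed.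

Lemma mx2_add a b c d a' b' c' d' :
  mx2 a b c d + mx2 a' b' c' d' = mx2 (a + a') (b + b') (c + c') (d + d').
Proof. by mx2_ext; rewrite !mxE. Qed.

Lemma mx2_scale x a b c d : x *: mx2 a b c d = mx2 (x * a) (x * b) (x * c) (x * d).
Proof. by mx2_ext; rewrite !mxE. Qed.

Lemma mx2_scalar x : x%:M = mx2 x 0 0 x.
Proof. by mx2_ext; rewrite !mxE. Qed.

Lemma mx2_zero : 0 = mx2 0 0 0 0.
Proof. by mx2_ext; rewrite !mxE. Qed.

Lemma mx2_diag_expr x y m : mx2 x 0 0 y ^+ m = mx2 (x ^+ m) 0 0 (y ^+ m).
Proof.
elim: m => [|m IHm]; first by rewrite !expr0 -mx2_scalar.
by rewrite exprSr IHm -mulmxE mx2_mul !(mulr0, mul0r, addr0, add0r) -!exprSr.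
Qed.

Lemma scalar_mx1_expr x m : (x%:M : 'M[R]_1) ^+ m = (x ^+ m)%:M.
Proof. by rewrite rmorphXn. Qed.

Lemma tensmx_mx2 a b c d (B : 'M[R]_2) :
  mx2 a b c d *t B = block_mx (a *: B) (b *: B) (c *: B) (d *: B).
Proof.
rewrite -[LHS](@submxK _ 2 2 2 2); f_equal; mx2_ext; rewrite !mxE /divn /modn /=;
  by congr (_ * B _ _); apply: val_inj.
Qed.

Lemma tens_scalar_mx2 x (B : 'M[R]_2) : (x%:M : 'M_1) *t B = x *: B.
Proof.
by mx2_ext; rewrite !mxE /divn /modn /= mulr1n; congr (_ * B _ _); apply: val_inj.
Qed.

Lemma tens_mx2_scalar x (A : 'M[R]_2) : A *t (x%:M : 'M_1) = x *: A.
Proof.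
by mx2_ext; rewrite !mxE /divn /modn /= mulr1n mulrC; congr (_ * A _ _); apply: val_inj.
Qed.

Lemma tens_scalar11 x y : (x%:M : 'M[R]_1) *t (y%:M : 'M_1) = (x * y)%:M.
Proof. by apply/matrixP; case=> [[|//] ?]; case=> [[|//] ?]; rewrite !mxE /= !mulr1n. Qed.

End Mx2.

Lemma wiso_sym (k : fieldType) (V W : wmod k) : wiso V W -> wiso W V.
Proof.
case=> P [Q [PQ QP PZ PX]]; exists Q, P.
have flip (A : 'M_(wdim V)) (B : 'M_(wdim W)) : P *m A = B *m P -> Q *m B = A *m Q.
  move=> PA; rewrite -[Q *m B]mulmx1 -PQ !mulmxA -(mulmxA Q) -PA.
  by rewrite !mulmxA QP mul1mx.
by split => //; apply: flip.
Qed.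

Lemma modM_Z (k : fieldType) (q : k) i : wZ (modM q i) = mx2 (q ^+ i) 0 0 (q ^+ i * q).
Proof.
apply/matrixP; case=> [[|[|//]] ?]; case=> [[|[|//]] ?];
  by rewrite !mxE /= ?addn0 ?addn1 ?exprSr.
Qed.

Lemma modM_X (k : fieldType) (q : k) i : wX (modM q i) = mx2 0 0 1 0.
Proof. by apply/matrixP; case=> [[|[|//]] ?]; case=> [[|[|//]] ?]; rewrite !mxE. Qed.

Lemma modN1_X (k : fieldType) : wX (modN1 k) = mx2 0 0 1 0.
Proof. by apply/matrixP; case=> [[|[|//]] ?]; case=> [[|[|//]] ?]; rewrite !mxE. Qed.

Lemma modS_expr (k : fieldType) (q : k) i j : q ^+ i = q ^+ j -> modS q i = modS q j.
Proof. by rewrite /modS => ->. Qed.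

Lemma modM_expr (k : fieldType) (q : k) i j : q ^+ i = q ^+ j -> modM q i = modM q j.
Proof.
move=> eq_ij; rewrite /modM; congr WMod; apply/matrixP => r c.
by rewrite !mxE !exprD eq_ij.
Qed.

Lemma prim_root_half (R : idomainType) m (z : R) :
  (2 * m).-primitive_root z -> z ^+ m = -1.
Proof.
move=> prim_z; have prim2 : 2.-primitive_root (z ^+ m).
  by have := dvdn_prim_root prim_z (dvdn_mulr m (dvdnn 2)); rewrite mulKn.
have : (z ^+ m) ^+ 2 == 1 by rewrite prim_expr_order.
rewrite sqrf_eq1 => /orP[/eqP zm1|/eqP //].
by have := prim_order_dvd prim2 1; rewrite expr1 zm1 eqxx.
Qed.

Lemma expr_Zp_add (R : pzSemiRingType) p (x : R) (i j : 'Z_p) :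
  (1 < p)%N -> x ^+ p = 1 -> x ^+ (i + j)%R = x ^+ (i + j).
Proof.
move=> p_gt1 xp; have xt : x ^+ (Zp_trunc p).+2 = 1 by rewrite Zp_cast.
by rewrite /= expr_mod.
Qed.

Lemma expr_Zp1 (R : pzSemiRingType) p (x : R) : x ^+ (1%R : 'Z_p) = x.
Proof. by rewrite /= modn_small ?expr1. Qed.

Section TensorRules.
Variables (k : fieldType) (n : nat) (q a : k).
Hypotheses (n_gt0 : (0 < n)%N) (q_neq0 : q != 0) (qn : q ^+ n = -1).

Local Notation S := (modS q).
Local Notation M := (modM q).
Local Notation N0 := (modN0 k).
Local Notation N1 := (modN1 k).
Local Notation T := (wtens n q a).

Ltac mx_eval := rewrite /wtens /wsum ?modM_Z ?modM_X ?modN1_X /=;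
  rewrite ?(expr0n, gtn_eqF n_gt0) /= ?mulr0n;
  rewrite ?(mul1mx, mulmx1, mul0mx, mulmx0, tens0mx, tensmx0, scaler0, addr0, add0r,
            (@block_mx0 _ 1 1 1 1));
  rewrite ?(@scalar_mx_block _ 2 2) -?(@block_mx0 _ 2 2 2 2) ?mx2_scalar ?mx2_zero;
  rewrite ?(mx2_diag_expr, scalar_mx1_expr, mx2_mul, mx2_add, mx2_scale, tensmx_mx2,
            tens_scalar_mx2, tens_mx2_scalar, tens_scalar11, (@mulmx_block _ 2 2 2 2 2 2),
            (@add_block_mx _ 2 2 2 2), (@scale_block_mx _ 2 2 2 2)).

Ltac mx_entries :=
  try (match goal with |- block_mx _ _ _ _ = block_mx _ _ _ _ => f_equal end);
  try (match goal with |- mx2 _ _ _ _ = mx2 _ _ _ _ => f_equal end);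
  try (match goal with |- _%:M = _%:M => f_equal end).

Tactic Notation "wiso_by" uconstr(P) uconstr(Q) :=
  exists P, Q; split; mx_eval; mx_entries;
  rewrite ?(exprD, expr1, exprMn, exprS, qn); by [|field].

Lemma wsum_modM_wiso_wtens i j :
  wiso (wsum (M (i + j)) (M (i + j + 1))) (T (M i) (M j)).
Proof.
(* the columns of the first matrix are v1 (x) v1 + a s v2 (x) v2, its image
   s v1 (x) v2 + v2 (x) v1 under X, then v1 (x) v2 and v2 (x) v2 *)
wiso_by
  (block_mx (mx2 1 0 0 (q ^+ i ^+ n)) (mx2 0 0 1 0)
            (mx2 0 1 (a * q ^+ i ^+ n) 0) (mx2 0 0 0 1))
  (block_mx (mx2 1 0 0 0) (mx2 0 0 1 0)
            (mx2 0 1 (- a * q ^+ i ^+ n) 0) (mx2 (- q ^+ i ^+ n) 0 0 1)).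
Qed.

Lemma wtens_S_S i j :
  wiso (T (S i) (S j)) (S (i + j)) /\ wiso (S (i + j)) (T (S j) (S i)).
Proof. by split; wiso_by 1%:M 1%:M. Qed.

Lemma wtens_S_M i j :
  wiso (T (S i) (M j)) (M (i + j)) /\ wiso (M (i + j)) (T (M j) (S i)).
Proof.
have s_neq0 : q ^+ i ^+ n != 0 by rewrite !expf_neq0.
split; last by wiso_by 1%:M 1%:M.
wiso_by (mx2 (q ^+ i ^+ n) 0 0 1) (mx2 (q ^+ i ^+ n)^-1 0 0 1).
Qed.

Lemma wtens_M_M i j :
  wiso (T (M i) (M j)) (wsum (M (i + j)) (M (i + j + 1))) /\
  wiso (wsum (M (i + j)) (M (i + j + 1))) (T (M j) (M i)).
Proof. by split; [apply: wiso_sym | rewrite addnC]; apply: wsum_modM_wiso_wtens. Qed.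

Lemma wtens_N0_S i :
  wiso (T N0 N0) N0 /\ wiso N0 (T N0 (S i)) /\ wiso (T N0 (S i)) (T (S i) N0).
Proof. by split; [|split]; wiso_by 1%:M 1%:M. Qed.

Lemma wtens_N0_N1 i :
  wiso (T N0 N1) (wsum N0 N0) /\ wiso (wsum N0 N0) (T N0 (M i)).
Proof. by split; wiso_by 1%:M 1%:M. Qed.

Lemma wtens_N1_N0 i :
  wiso (T N1 N0) N1 /\ wiso N1 (T (M i) N0) /\ wiso (T (M i) N0) (T N1 (S i)) /\
  wiso (T N1 (S i)) (T (S i) N1).
Proof.
have s_neq0 : q ^+ i ^+ n != 0 by rewrite !expf_neq0.
split; [|split; [|split]]; try by wiso_by 1%:M 1%:M.
wiso_by (mx2 1 0 0 (q ^+ i ^+ n)) (mx2 1 0 0 (q ^+ i ^+ n)^-1).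
Qed.

Local Notation tens_swap :=
  (block_mx (mx2 1 0 0 0) (mx2 0 0 1 0) (mx2 0 1 0 0) (mx2 0 0 0 1)).

Lemma wtens_N1_N1 i :
  wiso (T N1 N1) (wsum N1 N1) /\ wiso (wsum N1 N1) (T N1 (M i)) /\
  wiso (T N1 (M i)) (T (M i) N1).
Proof.
split; [|split]; try by wiso_by tens_swap tens_swap.
wiso_by (block_mx (mx2 1 0 0 1) (mx2 0 0 (q ^+ i ^+ n) 0) (mx2 0 0 0 0) (mx2 1 0 0 1))
        (block_mx (mx2 1 0 0 1) (mx2 0 0 (- q ^+ i ^+ n) 0) (mx2 0 0 0 0) (mx2 1 0 0 1)).
Qed.

End TensorRules.

Theorem theorem4p2 (k : closedFieldType) (hchar : [pchar k] =i pred0)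
  (n : nat) (hn : (1 <= n)%N) (q : k) (hq : (2 * n).-primitive_root q)
  (a : k) (ha : a != 0) :
  let S (i : 'Z_(2 * n)) := modS q (nat_of_ord i) in
  let M (i : 'Z_(2 * n)) := modM q (nat_of_ord i) in
  let N0 := modN0 k in
  let N1 := modN1 k in
  let T := wtens n q a in
  forall i j : 'Z_(2 * n),
  (* (1) *) (wiso (T (S i) (S j)) (S (i + j)) /\ wiso (S (i + j)) (T (S j) (S i))) /\
  (* (2) *) (wiso (T (S i) (M j)) (M (i + j)) /\ wiso (M (i + j)) (T (M j) (S i))) /\
  (* (3) *) (wiso (T (M i) (M j)) (wsum (M (i + j)) (M (i + j + 1)))
             /\ wiso (wsum (M (i + j)) (M (i + j + 1))) (T (M j) (M i))) /\
  (* (4) *) (wiso (T N0 N0) N0 /\ wiso N0 (T N0 (S i)) /\ wiso (T N0 (S i)) (T (S i) N0)) /\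
  (* (5) *) (wiso (T N0 N1) (wsum N0 N0) /\ wiso (wsum N0 N0) (T N0 (M i))) /\
  (* (6) *) (wiso (T N1 N0) N1 /\ wiso N1 (T (M i) N0) /\ wiso (T (M i) N0) (T N1 (S i))
             /\ wiso (T N1 (S i)) (T (S i) N1)) /\
  (* (7) *) (wiso (T N1 N1) (wsum N1 N1) /\ wiso (wsum N1 N1) (T N1 (M i))
             /\ wiso (T N1 (M i)) (T (M i) N1)).
Proof.
move=> S M N0 N1 T i j.
have q_neq0 : q != 0 by rewrite (prim_root_eq0 hq) muln_eq0 -lt0n hn.
have qn : q ^+ n = -1 := prim_root_half hq.
have n2_gt1 : (1 < 2 * n)%N by rewrite mul2n -addnn (leq_add hn hn).
have q2n := prim_expr_order hq.
have expr_ij : q ^+ (i + j)%R = q ^+ (i + j) by rewrite expr_Zp_add.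
have -> : S (i + j) = modS q (i + j) by apply: modS_expr.
have -> : M (i + j) = modM q (i + j) by apply: modM_expr.
have -> : M (i + j + 1) = modM q (i + j + 1).
  by apply: modM_expr; rewrite expr_Zp_add // exprD expr_ij expr_Zp1 -exprSr addn1.
split; first exact: wtens_S_S.
split; first exact: wtens_S_M.
split; first exact: wtens_M_M.
split; first exact: wtens_N0_S.
split; first exact: wtens_N0_N1.
split; first exact: wtens_N1_N0.
exact: wtens_N1_N1.
Qed.
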